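(* Let $n\ge2$ and let $\mathcal{H}=\{H_1,\dots,H_n\}$ be a family of graphs. Then $$\dim_l(K_n\circ\mathcal{H})=\sum_{i=1}^n\operatorname{adim}_l(H_i)+\max\{0,|I|-1\},$$ where $I=\{u_i\in V(K_n): H_i\in\mathcal{G}\}$. Furthermore, for a graph $H$: if $H\in\mathcal{G}$ then $\dim_l(K_n\circ H)=n\cdot\operatorname{adim}_l(H)+n-1$, and if $H\notin\mathcal{G}$ then $\dim_l(K_n\circ H)=n\cdot\operatorname{adim}_l(H)$.
   Context: All graphs are finite and simple with at least one vertex; $V(K_n)=\{u_1,\dots,u_n\}$. $d_G$ is shortest-path distance ($+\infty$ between components), $d_{G,2}=\min\{d_G,2\}$; $s$ distinguishes $x,y$ w.r.t. $d$ if $d(s,x)\ne d(s,y)$. $\dim_l(G)$: minimum size of $S\subseteq V(G)$ such that any two adjacent vertices are distinguished w.r.t. $d_G$ by some vertex of $S$. $\operatorname{adim}_l(H)$: minimum size of $S\subseteq V(H)$ such that any two adjacent vertices are distinguished w.r.t. $d_{H,2}$ by some vertex of $S$; minimum such sets are local adjacency bases. $\mathcal{G}$: class of graphs $H$ such that every local adjacency basis $B$ of $H$ satisfies $B\subseteq N_H(v)$ for some $v\in V(H)$. Lexicographic product $G\circ\mathcal{H}$: vertex set $\bigcup_i\{u_i\}\times V(H_i)$, $(u_i,v)\sim(u_j,w)$ iff $u_iu_j\in E(G)$, or $i=j$ and $vw\in E(H_i)$; $G\circ H$ means all $H_i\cong H$. *)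

From mathcomp Require Import all_boot.
Set Implicit Arguments. Unset Strict Implicit. Unset Printing Implicit Defensive.

Record sgraph := SGraph {
  vT :> finType;
  adj : rel vT;
  adj_sym : symmetric adj;
  adj_irr : irreflexive adj;
  vT_nonempty : 0 < #|vT| }.

Section Dist.
Variables (T : finType) (e : rel T).

Definition has_walk (x y : T) (k : nat) : bool :=
  [exists p : k.-tuple T, path e x p && (last x p == y)].

(* shortest-path distance; None encodes +infinity (different components).
   The minimum length of a walk equals the shortest-path length, and any
   shortest path has length < #|T|. *)
Definition dist (x y : T) : option nat :=
  ohead [seq k <- iota 0 #|T| | has_walk x y k].

Definition dist2 (x y : T) : nat :=
  if dist x y is Some k then minn k 2 else 2.

Definition local_resolving (S : {set T}) : bool :=
  [forall x, forall y, e x y ==> [exists s in S, dist s x != dist s y]].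

Definition local_adj_resolving (S : {set T}) : bool :=
  [forall x, forall y, e x y ==> [exists s in S, dist2 s x != dist2 s y]].

Definition ldim : nat :=
  #|[arg min_(S < [set: T] | local_resolving S) #|S|]|.

Definition ladim : nat :=
  #|[arg min_(S < [set: T] | local_adj_resolving S) #|S|]|.

Definition local_adj_basis (B : {set T}) : bool :=
  local_adj_resolving B && (#|B| == ladim).

Definition nbhd (v : T) : {set T} := [set u | e v u].

End Dist.

Definition inG (H : sgraph) : bool :=
  [forall B : {set H}, local_adj_basis (@adj H) B ==>
     [exists v : H, B \subset nbhd (@adj H) v]].

Definition lexprod (I : finType) (eI : rel I) (H : I -> sgraph)
  : rel {i : I & H i} :=
  fun p q => eI (tag p) (tag q) ||
    ((tag p == tag q) && adj (tagged p) (tagged_as p q)).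

(* adjacency of K_n on 'I_n (vertex u_{i+1} <-> i) *)
Definition Kn_adj (n : nat) : rel 'I_n := fun i j => i != j.
Arguments lexprod {I} eI H p q.

From mathcomp Require Import all_boot zify.
Set Implicit Arguments. Unset Strict Implicit. Unset Printing Implicit Defensive.

(* In K_n o H (n >= 2) two vertices in different copies are adjacent and two
   vertices in the same copy have a common neighbour in another copy, so all
   distances lie in {0, 1, 2} and inside a copy H_i they coincide with d_{H_i,2}.
   Hence S is a local resolving set iff every slice S_i is a local adjacency
   resolving set of H_i and at most one slice lies in a neighbourhood: adjacent
   vertices (i, a), (j, b) with i <> j are only told apart by a vertex of S_i not
   adjacent to a or of S_j not adjacent to b.  A slice of a graph of the class G
   that lies in no neighbourhood needs adim_l(H_i) + 1 vertices, and such a slice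
   always exists, so every member of G except one pays an extra vertex. *)

Section Distances.
Variables (T : finType) (e : rel T).

Lemma has_walk0 x y : has_walk e x y 0 = (x == y).
Proof.
apply/existsP/idP => [[p]|/eqP<-]; last by exists (in_tuple [::]); rewrite /= eqxx.
by rewrite (tuple0 p).
Qed.

Lemma has_walk1 x y : has_walk e x y 1 = e x y.
Proof.
apply/existsP/idP => [[[s sz]]|exy]; last first.
  by exists (in_tuple [:: y]); rewrite /= exy eqxx.
by case: s sz => [|z [|? ?]] //= _ /andP[]; rewrite andbT => exz /eqP <-.
Qed.

Lemma has_walk2 x y z : e x z -> e z y -> has_walk e x y 2.
Proof.
by move=> exz ezy; apply/existsP; exists (in_tuple [:: z; y]); rewrite /= exz ezy eqxx.
Qed.

Lemma dist_has_walk x y k : dist e x y = Some k -> has_walk e x y k.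
Proof.
rewrite /dist; case E: [seq _ <- _ | _] => [|a s] //= [<-].
have: a \in a :: s by rewrite mem_head.
by rewrite -E mem_filter => /andP[].
Qed.

Lemma dist_least x y k : k < #|T| -> has_walk e x y k ->
  (forall j, j < k -> ~~ has_walk e x y j) -> dist e x y = Some k.
Proof.
move=> kT walk_k no_shorter; rewrite /dist -(subnKC (ltnW kT)) iotaD filter_cat.
have -> : [seq j <- iota 0 k | has_walk e x y j] = [::].
  apply/eqP; rewrite -[_ == _]negbK -has_filter; apply/hasPn => j.
  by rewrite mem_iota => /andP[_]; apply: no_shorter.
by move: kT; rewrite -subn_gt0; case: (#|T| - k) => //= m _; rewrite add0n walk_k.
Qed.

Lemma dist_eq0 x : dist e x x = Some 0.
Proof. by apply: dist_least; rewrite ?has_walk0 //; apply/card_gt0P; exists x. Qed.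

Lemma dist_eq1 x y : x != y -> e x y -> dist e x y = Some 1.
Proof.
move=> xy exy; apply: dist_least; rewrite ?has_walk1 //.
  by apply/card_gt1P; exists x, y.
by case=> // _; rewrite has_walk0.
Qed.

Lemma dist2E x y : dist2 e x y = if x == y then 0 else if e x y then 1 else 2.
Proof.
rewrite /dist2; case: eqVneq => [<-|xy]; first by rewrite dist_eq0.
case: ifP => exy; first by rewrite dist_eq1.
case D: dist => [k|] //; move/dist_has_walk: D.
by case: k => [|[|k]] //; rewrite ?has_walk0 ?has_walk1 ?(negbTE xy) ?exy.
Qed.

Definition in_some_nbhd (A : {set T}) : bool := [exists v, A \subset nbhd e v].

Hypothesis e_irr : irreflexive e.

Lemma adj_neq x y : e x y -> x != y.
Proof. by apply: contraTneq => ->; rewrite e_irr. Qed.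

Lemma dist_eq2 x y z : x != y -> ~~ e x y -> e x z -> e z y -> dist e x y = Some 2.
Proof.
move=> xy nexy xz zy; apply: dist_least (has_walk2 xz zy) _.
  rewrite -cardsT; apply: leq_trans (subset_leq_card (subsetT [set x; y; z])).
  rewrite setUC cardsU1 cards2 !inE negb_or xy.
  by rewrite eq_sym (adj_neq xz) (adj_neq zy).
by case=> [|[|]] // _; rewrite ?has_walk0 ?has_walk1.
Qed.

Lemma dist_diam2 :
    (forall x y, x != y -> ~~ e x y -> exists z, e x z && e z y) ->
  forall x y, dist e x y = Some (dist2 e x y).
Proof.
move=> diam2 x y; rewrite dist2E; case: eqVneq => [<-|xy]; first exact: dist_eq0.
case: ifP => exy; first exact: dist_eq1.
have [z /andP[xz zy]] := diam2 x y xy (negbT exy).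
exact: dist_eq2 xy (negbT exy) xz zy.
Qed.

Lemma local_adj_resolving_setT : local_adj_resolving e [set: T].
Proof.
apply/forallP => x; apply/forallP => y; apply/implyP => exy.
by apply/exists_inP; exists x; rewrite // !dist2E eqxx exy (negbTE (adj_neq exy)).
Qed.

Lemma local_resolving_setT : local_resolving e [set: T].
Proof.
apply/forallP => x; apply/forallP => y; apply/implyP => exy.
apply/exists_inP; exists x; rewrite // dist_eq0.
by apply: contra (adj_neq exy) => /eqP/esym/dist_has_walk; rewrite has_walk0.
Qed.

Lemma ldim_min S : local_resolving e S -> ldim e <= #|S|.
Proof.
rewrite /ldim.
by case: (arg_minnP (fun S : {set T} => #|S|) local_resolving_setT) => B _; apply.
Qed.

Lemma ldim_attained : exists2 S, local_resolving e S & #|S| = ldim e.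
Proof.
rewrite /ldim.
by case: (arg_minnP (fun S : {set T} => #|S|) local_resolving_setT) => B; exists B.
Qed.

Lemma ladim_min S : local_adj_resolving e S -> ladim e <= #|S|.
Proof.
rewrite /ladim.
by case: (arg_minnP (fun S : {set T} => #|S|) local_adj_resolving_setT) => B _; apply.
Qed.

Lemma local_adj_basis_exists : exists B, local_adj_basis e B.
Proof.
rewrite /local_adj_basis /ladim.
case: (arg_minnP (fun S : {set T} => #|S|) local_adj_resolving_setT) => B hB _.
by exists B; rewrite hB eqxx.
Qed.

Lemma local_adj_resolvingS (A B : {set T}) :
  A \subset B -> local_adj_resolving e A -> local_adj_resolving e B.
Proof.
move=> /subsetP AB /forallP resA; apply/forallP => x; apply/forallP => y.
apply/implyP => exy; have /forallP/(_ y)/implyP/(_ exy)/exists_inP[s sA ds] := resA x.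
by apply/exists_inP; exists s; first exact: AB.
Qed.

End Distances.

Lemma sum_nat_of_bool (I : finType) (P : pred I) :
  \sum_i (P i : nat) = #|[set i | P i]|.
Proof. by rewrite -sum1dep_card [RHS]big_mkcond; apply: eq_bigr => i _; case: (P i). Qed.

Lemma card_set_but_pick (T : finType) (A : {set T}) :
  #|[set x in A | [pick y in A] != Some x]| = #|A| - 1.
Proof.
case: pickP => [y yA|A0].
  rewrite (cardsD1 y A) yA add1n subn1 /=; apply: eq_card => x.
  by rewrite !inE andbC (inj_eq Some_inj) eq_sym.
have A_empty : A = set0 by apply/setP => x; rewrite inE A0.
rewrite A_empty cards0; apply/eqP; rewrite cards_eq0.
by apply/eqP/setP => x; rewrite !inE.
Qed.

Section ClassG.
Variable G : sgraph.
Local Notation adjG := (@adj G).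

Lemma dist2_adj (a c : G) : adj a c -> dist2 adjG c a = 1.
Proof.
by move=> ac; rewrite dist2E adj_sym ac eq_sym (negbTE (adj_neq (@adj_irr G) ac)).
Qed.

Lemma dist2_nadj (a c : G) : ~~ adj a c -> dist2 adjG c a != 1.
Proof. by move=> nac; rewrite dist2E adj_sym (negbTE nac); case: (c == a). Qed.

Lemma exists_local_adj_resolving_not_in_nbhd : exists A : {set G},
  [&& local_adj_resolving adjG A, ~~ in_some_nbhd adjG A & #|A| == ladim adjG + inG G].
Proof.
case: (boolP (inG G)) => [inGG|]; last first.
  rewrite /inG negb_forall => /existsP[B]; rewrite negb_imply.
  case/andP=> /andP[resB /eqP cardB] notnbB.
  by exists B; rewrite resB notnbB cardB addn0 eqxx.
have [B basisB] := local_adj_basis_exists (@adj_irr G).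
have /existsP[v /subsetP Bv] := implyP (forallP inGG B) basisB.
case/andP: basisB => resB /eqP cardB.
have vB : v \notin B by apply/negP => /Bv; rewrite inE adj_irr.
exists (v |: B); rewrite cardsU1 vB cardB addnC eqxx andbT.
rewrite (local_adj_resolvingS (subsetUr _ _) resB) /=.
(* A common neighbour u of v and B cannot be told apart from v by B. *)
apply/existsP => -[u /subsetP uN].
have uv : adj u v by have := uN v; rewrite !inE eqxx; apply.
have /forallP/(_ v)/implyP/(_ uv)/exists_inP[b bB] := forallP resB u.
have ub : adj u b by have := uN b; rewrite !inE bB orbT; apply.
have vb : adj v b by have := Bv b bB; rewrite inE.
by rewrite !dist2_adj.
Qed.

Lemma ladim_add_inG_le (A : {set G}) : local_adj_resolving adjG A ->
  ladim adjG + (inG G && ~~ in_some_nbhd adjG A) <= #|A|.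
Proof.
move=> resA; have := ladim_min (@adj_irr G) resA.
case: (boolP (inG G)) => [inGG|_] /=; last by rewrite addn0.
case: (boolP (in_some_nbhd adjG A)) => [_|notnbA] /=; first by rewrite addn0.
rewrite addn1 ltn_neqAle => ->; rewrite andbT.
apply: (contraNneq _ notnbA) => cardA; apply: (implyP (forallP inGG A)).
by rewrite /local_adj_basis resA cardA eqxx.
Qed.

End ClassG.

Section KnLexProduct.
Variables (n : nat) (H : 'I_n -> sgraph).
Hypothesis n_gt1 : 1 < n.

Local Notation V := {i : 'I_n & H i}.
Local Notation lex := (lexprod (@Kn_adj n) H).
Local Notation vtx := (Tagged (fun i => vT (H i))).

Lemma lexprod_same i (a b : H i) : lex (vtx a) (vtx b) = adj a b.
Proof. by rewrite /lexprod /Kn_adj /= eqxx /= tagged_asE. Qed.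

Lemma lexprod_diff i j (a : H i) (b : H j) : i != j -> lex (vtx a) (vtx b).
Proof. by move=> ij; rewrite /lexprod /Kn_adj /= ij. Qed.

Lemma lexprod_irr : irreflexive lex.
Proof. by case=> i a; rewrite lexprod_same adj_irr. Qed.

Lemma lexprod_diam2 (x y : V) :
  x != y -> ~~ lex x y -> exists z, lex x z && lex z y.
Proof.
case: x y => i a [j b] _; case: (eqVneq i j) => [ij _|ij]; last by rewrite lexprod_diff.
subst j; have [k] : exists k, k \in predC1 i.
  by apply/card_gt0P; rewrite cardC1 card_ord -subn1 subn_gt0.
rewrite inE => ki; have /card_gt0P[c _] := vT_nonempty (H k).
by exists (vtx c); rewrite !lexprod_diff // eq_sym.
Qed.

Lemma local_resolving_lexprod (S : {set V}) :
  local_resolving lex S = local_adj_resolving lex S.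
Proof.
apply: eq_forallb => x; apply: eq_forallb => y; congr (_ ==> _).
apply: eq_existsb => s.
by rewrite !(dist_diam2 lexprod_irr lexprod_diam2) (inj_eq Some_inj).
Qed.

Lemma dist2_lexprod_same i (c a : H i) :
  dist2 lex (vtx c) (vtx a) = dist2 (@adj (H i)) c a.
Proof. by rewrite !dist2E lexprod_same eq_Tagged. Qed.

Lemma dist2_lexprod_diff i j (c : H i) (b : H j) :
  i != j -> dist2 lex (vtx c) (vtx b) = 1.
Proof.
move=> ij; have cb := lexprod_diff c b ij.
by rewrite dist2E cb (negbTE (adj_neq lexprod_irr cb)).
Qed.

Definition slice (S : {set V}) i : {set H i} := [set a | vtx a \in S].

Lemma card_slices (S : {set V}) : #|S| = \sum_i #|slice S i|.
Proof.
rewrite -sum1_card; under [RHS]eq_bigr => i _ do rewrite -sum1_card.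
rewrite (sig_big_dep (fun i => true) (fun i a => a \in slice S i) (fun i a => 1)) /=.
by apply: eq_bigl => -[i a]; rewrite inE.
Qed.

Lemma slice_local_adj_resolving (S : {set V}) i :
  local_adj_resolving lex S -> local_adj_resolving (@adj (H i)) (slice S i).
Proof.
move=> /forallP resS; apply/forallP => a; apply/forallP => b; apply/implyP => ab.
move: (resS (vtx a)) => /forallP/(_ (vtx b))/implyP.
rewrite lexprod_same => /(_ ab)/exists_inP[[k c] cS].
case: (eqVneq k i) => [ki|ki]; last by rewrite !dist2_lexprod_diff.
by subst k; rewrite !dist2_lexprod_same => dc; apply/exists_inP; exists c; rewrite ?inE.
Qed.

Lemma slices_in_nbhd_unique (S : {set V}) i j : local_adj_resolving lex S ->
  in_some_nbhd (@adj (H i)) (slice S i) -> in_some_nbhd (@adj (H j)) (slice S j) ->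
  i = j.
Proof.
move=> /forallP resS /existsP[a /subsetP Na] /existsP[b /subsetP Nb].
case: (eqVneq i j) => // ij.
move: (resS (vtx a)) => /forallP/(_ (vtx b))/implyP.
rewrite lexprod_diff // => /(_ isT)/exists_inP[[k c] cS].
case: (eqVneq k i) => [ki|ki].
  subst k; rewrite dist2_lexprod_same dist2_lexprod_diff // dist2_adj ?eqxx //.
  by have := Na c; rewrite !inE; apply.
case: (eqVneq k j) => [kj|kj]; last by rewrite !dist2_lexprod_diff // eqxx.
subst k; rewrite dist2_lexprod_same dist2_lexprod_diff 1?eq_sym // dist2_adj ?eqxx //.
by have := Nb c; rewrite !inE; apply.
Qed.

Lemma cross_distinguished (S : {set V}) i j (a : H i) (b : H j) : i != j ->
  ~~ in_some_nbhd (@adj (H i)) (slice S i) ->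
  [exists s in S, dist2 lex s (vtx a) != dist2 lex s (vtx b)].
Proof.
move=> ij /existsPn/(_ a)/subsetPn[c]; rewrite !inE => cS nac.
apply/exists_inP; exists (vtx c) => //.
by rewrite dist2_lexprod_same dist2_lexprod_diff // dist2_nadj.
Qed.

Lemma local_adj_resolving_of_slices (S : {set V}) :
    (forall i, local_adj_resolving (@adj (H i)) (slice S i)) ->
    (forall i j, in_some_nbhd (@adj (H i)) (slice S i) ->
                 in_some_nbhd (@adj (H j)) (slice S j) -> i = j) ->
  local_adj_resolving lex S.
Proof.
move=> res_slices nbhd_unique.
apply/forallP => -[i a]; apply/forallP => -[j b]; apply/implyP => ab.
case: (eqVneq i j) => [ij|ij].
  subst j; move: ab; rewrite lexprod_same => ab.
  have /forallP/(_ a)/forallP/(_ b)/implyP/(_ ab)/exists_inP[c] := res_slices i.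
  by rewrite inE => cS dc; apply/exists_inP; exists (vtx c); rewrite ?dist2_lexprod_same.
case: (boolP (in_some_nbhd (@adj (H i)) (slice S i))) => [nbi|]; last first.
  exact: cross_distinguished.
have notnbj : ~~ in_some_nbhd (@adj (H j)) (slice S j).
  by apply/negP => nbj; move: ij; rewrite (nbhd_unique _ _ nbi nbj) eqxx.
rewrite eq_sym in ij; case/exists_inP: (cross_distinguished b a ij notnbj) => s sS ds.
by apply/exists_inP; exists s; rewrite // eq_sym.
Qed.

Lemma ldim_lexprod_ge :
  \sum_i ladim (@adj (H i)) + (#|[set i | inG (H i)]| - 1) <= ldim lex.
Proof.
have [S resS <-] := ldim_attained lexprod_irr.
rewrite local_resolving_lexprod in resS.
set K := [set i | in_some_nbhd (@adj (H i)) (slice S i)].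
have card_K : #|K| <= 1.
  rewrite leqNgt; apply/card_gt1P => -[i [j [iK jK ij]]]; rewrite !inE in iK jK.
  by rewrite (slices_in_nbhd_unique resS iK jK) eqxx in ij.
have slices_ge : \sum_i (ladim (@adj (H i)) +
    (inG (H i) && ~~ in_some_nbhd (@adj (H i)) (slice S i))) <= \sum_i #|slice S i|.
  by apply: leq_sum => i _; apply/ladim_add_inG_le/slice_local_adj_resolving.
rewrite card_slices; apply: leq_trans slices_ge.
rewrite big_split /= leq_add2l sum_nat_of_bool leq_subLR.
set J := [set i | _].
have I_sub : [set i | inG (H i)] \subset J :|: K.
  by apply/subsetP => i; rewrite !inE => ->; case: in_some_nbhd.
by apply: leq_trans (subset_leq_card I_sub) _; rewrite cardsU; lia.
Qed.

Lemma ldim_lexprod_le :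
  ldim lex <= \sum_i ladim (@adj (H i)) + (#|[set i | inG (H i)]| - 1).
Proof.
set I := [set i | inG (H i)].
pose basis i := xchoose (local_adj_basis_exists (@adj_irr (H i))).
pose spread i := xchoose (exists_local_adj_resolving_not_in_nbhd (H i)).
pose A i := if [pick j in I] == Some i then basis i else spread i.
pose S := [set x : V | tagged x \in A (tag x)].
have sliceS i : slice S i = A i by apply/setP => a; rewrite !inE.
have basisP i : local_adj_basis (@adj (H i)) (basis i) := xchooseP _.
have spreadP i := xchooseP (exists_local_adj_resolving_not_in_nbhd (H i)).
have resA i : local_adj_resolving (@adj (H i)) (A i).
  by rewrite /A; case: ifP => _; [case/andP: (basisP i) | case/and3P: (spreadP i)].
have cardA i :
    #|A i| = ladim (@adj (H i)) + (inG (H i) && ([pick j in I] != Some i)).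
  rewrite /A; case: eqP => _ /=.
    by case/andP: (basisP i) => _ /eqP ->; rewrite andbF addn0.
  by case/and3P: (spreadP i) => _ _ /eqP ->; rewrite andbT.
have nbhdA i : in_some_nbhd (@adj (H i)) (A i) -> [pick j in I] = Some i.
  rewrite /A; case: eqP => // _.
  by case/and3P: (spreadP i) => _ /negbTE ->.
have resS : local_resolving lex S.
  rewrite local_resolving_lexprod; apply: local_adj_resolving_of_slices => [i|i j].
    by rewrite sliceS.
  by rewrite !sliceS => /nbhdA pick_i /nbhdA; rewrite pick_i => -[].
apply: leq_trans (ldim_min lexprod_irr resS) _.
rewrite card_slices; under eq_bigr => i _ do rewrite sliceS cardA.
rewrite big_split /= leq_add2l sum_nat_of_bool -card_set_but_pick.
by apply: eq_leq; apply: eq_card => i; rewrite !inE.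
Qed.

Theorem ldim_lexprod_Kn :
  ldim lex = \sum_i ladim (@adj (H i)) + (#|[set i | inG (H i)]| - 1).
Proof. by apply/eqP; rewrite eqn_leq ldim_lexprod_le ldim_lexprod_ge. Qed.

End KnLexProduct.

Theorem corollary2 (n : nat) (hn : 2 <= n) (H : 'I_n -> sgraph) :
  ldim (lexprod (@Kn_adj n) H) =
    \sum_(i < n) ladim (@adj (H i)) + (#|[set i : 'I_n | inG (H i)]| - 1)
  /\ (forall G : sgraph,
        (inG G -> ldim (lexprod (@Kn_adj n) (fun _ => G)) =
                    n * ladim (@adj G) + n - 1)
     /\ (~~ inG G -> ldim (lexprod (@Kn_adj n) (fun _ => G)) =
                    n * ladim (@adj G))).
Proof.
split; first exact: ldim_lexprod_Kn.
move=> G; rewrite ldim_lexprod_Kn // sum_nat_const card_ord mulnC.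
split=> [inGG|notinG].
  have -> : [set _ : 'I_n | inG G] = setT by apply/setP => i; rewrite !inE inGG.
  by rewrite cardsT card_ord addnBA // ltnW.
have -> : [set _ : 'I_n | inG G] = set0 by apply/setP => i; rewrite !inE (negbTE notinG).
by rewrite cards0 addn0.
Qed.
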